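(* Let $\tau\in(0,\infty]$ and let $\{(\theta_i,\omega_i)\}_{i=1}^N$ be a smooth solution on $[0,\tau)$ of the second-order Kuramoto model with bonding force $$\dot\theta_i=\omega_i,\qquad \dot\omega_i=\frac{1}{N}\sum_{j=1}^N\big[\kappa_0\cos(\theta_j-\theta_i)+\kappa_1\big](\omega_j-\omega_i)+\frac{\kappa_2}{N}\sum_{j=1}^N\big[|\theta_j-\theta_i|-\theta^\infty_{ij}\big]\operatorname{sgn}(\theta_j-\theta_i),\quad i\in[N].$$ Then for all $t\in[0,\tau)$, $$\mathcal{E}(t)+\int_0^t\mathcal{P}(s)\,ds=\mathcal{E}(0),\qquad \mathcal{P}:=\frac{1}{2N}\sum_{i,j=1}^N\big(\kappa_0\cos(\theta_j-\theta_i)+\kappa_1\big)|\omega_j-\omega_i|^2.$$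
   Context: $N\ge 2$, $[N]=\{1,\dots,N\}$, $\kappa_0,\kappa_1,\kappa_2\ge 0$ are constants, $[\theta^\infty_{ij}]$ is a real $N\times N$ matrix with $\theta^\infty_{ii}=0$ and $\theta^\infty_{ij}=\theta^\infty_{ji}$; $\operatorname{sgn}$ is the sign function. The total energy is $\mathcal{E}:=\frac12\sum_{i=1}^N|\omega_i|^2+\frac{\kappa_2}{4N}\sum_{i,j=1}^N\big(|\theta_j-\theta_i|-\theta^\infty_{ij}\big)^2$. *)

From Stdlib Require Import Reals Lra.
From Coquelicot Require Import Coquelicot.
Open Scope R_scope.

Definition sgn (x : R) : R :=
  if Rlt_dec 0 x then 1 else if Rlt_dec x 0 then -1 else 0.

(* sumI N f = f 0 + ... + f (N-1); particle i of the paper is index i-1 here *)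
Fixpoint sumI (N : nat) (f : nat -> R) : R :=
  match N with
  | O => 0
  | S n => sumI n f + f n
  end.

Definition kuramoto_rhs (N : nat) (k0 k1 k2 : R) (thinf : nat -> nat -> R)
  (th om : nat -> R) (i : nat) : R :=
  / INR N * sumI N (fun j => (k0 * cos (th j - th i) + k1) * (om j - om i))
  + k2 / INR N * sumI N (fun j => (Rabs (th j - th i) - thinf i j) * sgn (th j - th i)).

Definition energy (N : nat) (k2 : R) (thinf : nat -> nat -> R)
  (th om : nat -> R) : R :=
  / 2 * sumI N (fun i => (om i) ^ 2)
  + k2 / (4 * INR N) *
    sumI N (fun i => sumI N (fun j => (Rabs (th j - th i) - thinf i j) ^ 2)).

Definition production (N : nat) (k0 k1 : R) (th om : nat -> R) : R :=
  / (2 * INR N) *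
    sumI N (fun i => sumI N (fun j =>
      (k0 * cos (th j - th i) + k1) * (Rabs (om j - om i)) ^ 2)).

From Stdlib Require Import Reals Lra Lia List.
From Coquelicot Require Import Coquelicot.
Open Scope R_scope.

(* Write the velocity equation as  dω_i/dt = C_i − J_i,  where C_i is a continuous
   function of the state and  J_i = (κ2/N) Σ_j θ∞_ij sgn(θ_j − θ_i)  is the only
   discontinuous part.  J_i is the derivative of  ∫ C_i − ω_i  and takes finitely many
   values, so by Darboux's theorem it is constant along the solution.  Symmetrising the
   double sum,  Σ_ij θ∞_ij |θ_j − θ_i| = −2 Σ_i θ_i Σ_j θ∞_ij sgn(θ_j − θ_i),  so with J
   frozen the energy is a smooth function of the state, and the same symmetrisation of
   its derivative gives  dE/dt = −P.  The mean value theorem then yields the identity,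
   continuity at t = 0 being obtained by extending the solution constantly to t < 0. *)

Lemma sumI_ext n f g : (forall i, (i < n)%nat -> f i = g i) -> sumI n f = sumI n g.
Proof.
  induction n as [|n IH]; intros Hfg; simpl; [reflexivity|].
  rewrite IH by (intros i Hi; apply Hfg; lia). rewrite Hfg by lia. reflexivity.
Qed.

Lemma sumI_plus n f g : sumI n (fun i => f i + g i) = sumI n f + sumI n g.
Proof. induction n as [|n IH]; simpl; [ring | rewrite IH; ring]. Qed.

Lemma sumI_mult_l n c f : sumI n (fun i => c * f i) = c * sumI n f.
Proof. induction n as [|n IH]; simpl; [ring | rewrite IH; ring]. Qed.

Lemma sumI_swap n m (f : nat -> nat -> R) :
  sumI n (fun i => sumI m (fun j => f i j)) = sumI m (fun j => sumI n (fun i => f i j)).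
Proof.
  induction n as [|n IH]; simpl.
  - induction m as [|m IHm]; simpl; [reflexivity | rewrite <- IHm; ring].
  - rewrite IH, <- sumI_plus. reflexivity.
Qed.

Lemma sumI_sumI_antisym n (U : nat -> nat -> R) :
  (forall i j, (i < n)%nat -> (j < n)%nat -> U i j + U j i = 0) ->
  sumI n (fun i => sumI n (fun j => U i j)) = 0.
Proof.
  intros HU.
  assert (Hnull : forall m, sumI m (fun _ => 0) = 0) by (induction m; simpl; lra).
  assert (Hzero : sumI n (fun i => sumI n (fun j => U i j))
                  + sumI n (fun i => sumI n (fun j => U j i)) = 0).
  { rewrite <- sumI_plus, <- (Hnull n). apply sumI_ext; intros i Hi.
    rewrite <- sumI_plus, <- (Hnull n). apply sumI_ext; auto. }
  rewrite (sumI_swap n n (fun i j => U j i)) in Hzero. lra.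
Qed.

Lemma sumI2_ext n (A B : nat -> nat -> R) :
  (forall i j, (i < n)%nat -> (j < n)%nat -> A i j = B i j) ->
  sumI n (fun i => sumI n (fun j => A i j)) = sumI n (fun i => sumI n (fun j => B i j)).
Proof. intros HAB. apply sumI_ext. intros i Hi. apply sumI_ext. auto. Qed.

Lemma sumI2_plus n (A B : nat -> nat -> R) :
  sumI n (fun i => sumI n (fun j => A i j + B i j))
  = sumI n (fun i => sumI n (fun j => A i j)) + sumI n (fun i => sumI n (fun j => B i j)).
Proof.
  rewrite <- sumI_plus. apply sumI_ext. intros i _. apply sumI_plus.
Qed.

Lemma sumI2_mult_l n c (A : nat -> nat -> R) :
  sumI n (fun i => sumI n (fun j => c * A i j)) = c * sumI n (fun i => sumI n (fun j => A i j)).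
Proof.
  rewrite <- sumI_mult_l. apply sumI_ext. intros i _. apply sumI_mult_l.
Qed.

Lemma sumI_mult_sumI n (a : nat -> R) (B : nat -> nat -> R) :
  sumI n (fun i => a i * sumI n (fun j => B i j)) = sumI n (fun i => sumI n (fun j => a i * B i j)).
Proof. apply sumI_ext. intros i _. symmetry. apply sumI_mult_l. Qed.

Lemma sumI2_antisym_mult_diff n (u : nat -> nat -> R) (v : nat -> R) :
  (forall i j, (i < n)%nat -> (j < n)%nat -> u j i = - u i j) ->
  sumI n (fun i => sumI n (fun j => u i j * (v j - v i)))
  = -2 * sumI n (fun i => sumI n (fun j => v i * u i j)).
Proof.
  intros Hu.
  assert (H0 : sumI n (fun i => sumI n (fun j => u i j * (v j - v i) + 2 * (v i * u i j))) = 0).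
  { apply sumI_sumI_antisym. intros i j Hi Hj. rewrite (Hu i j Hi Hj). ring. }
  rewrite sumI2_plus, sumI2_mult_l in H0. lra.
Qed.

Lemma sgn_opp x : sgn (- x) = - sgn x.
Proof. unfold sgn. repeat destruct Rlt_dec; lra. Qed.

Lemma Rabs_mult_sgn x : Rabs x * sgn x = x.
Proof. unfold sgn, Rabs. repeat destruct Rlt_dec; destruct Rcase_abs; lra. Qed.

Lemma mult_sgn x : x * sgn x = Rabs x.
Proof. unfold sgn, Rabs. repeat destruct Rlt_dec; destruct Rcase_abs; lra. Qed.

Lemma sgn_cases x : sgn x = 1 \/ sgn x = -1 \/ sgn x = 0.
Proof. unfold sgn. repeat destruct Rlt_dec; auto. Qed.

Fixpoint signed_sums (c : nat -> R) (n : nat) : list R :=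
  match n with
  | O => 0 :: nil
  | S n => flat_map (fun v => v + c n :: v - c n :: v :: nil) (signed_sums c n)
  end.

Lemma In_signed_sums (c e : nat -> R) n :
  (forall j, (j < n)%nat -> e j = 1 \/ e j = -1 \/ e j = 0) ->
  In (sumI n (fun j => c j * e j)) (signed_sums c n).
Proof.
  induction n as [|n IH]; intros He; simpl; [auto |].
  apply in_flat_map. exists (sumI n (fun j => c j * e j)).
  split; [apply IH; intros j Hj; apply He; lia |].
  destruct (He n) as [-> | [-> | ->]]; [lia | left | right; left | right; right; left]; ring.
Qed.

Lemma interval_not_in_list (L : list R) p q : p < q -> exists y, p < y < q /\ ~ In y L.
Proof.
  revert p q; induction L as [|x L IH]; intros p q Hpq.
  - exists ((p + q) / 2). split; [lra | auto].
  - destruct (Rle_dec x ((p + q) / 2)).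
    + destruct (IH ((p + q) / 2) q) as [y [Hy Hn]]; [lra |].
      exists y. split; [lra |]. intros [Hx | Hin]; [lra | auto].
    + destruct (IH p ((p + q) / 2)) as [y [Hy Hn]]; [lra |].
      exists y. split; [lra |]. intros [Hx | Hin]; [lra | auto].
Qed.

Lemma derivable_pt_lim_descent g c l v : derivable_pt_lim g c l -> v * l < 0 ->
  forall eta, 0 < eta -> exists h, 0 < h < eta /\ g (c + h * v) < g c.
Proof.
  intros Hd Hvl eta Heta.
  assert (Hv : 0 < Rabs v) by (apply Rabs_pos_lt; intros ->; lra).
  destruct (Hd (- (v * l) / (2 * Rabs v))) as [[d Hdpos] Hdd].
  { apply Rdiv_lt_0_compat; lra. }
  set (h := Rmin (eta / 2) (d / (2 * Rabs v))).
  assert (Hh : 0 < h) by (apply Rmin_pos; [lra | apply Rdiv_lt_0_compat; lra]).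
  assert (Hheta : h <= eta / 2) by apply Rmin_l.
  assert (Hhd : h * Rabs v <= d / 2).
  { replace (d / 2) with (d / (2 * Rabs v) * Rabs v) by (field; lra).
    apply Rmult_le_compat_r; [lra | apply Rmin_r]. }
  exists h. split; [lra |].
  assert (Hhv : h * v <> 0) by (apply Rmult_integral_contrapositive; split; [lra | intros ->; lra]).
  assert (Hq := Hdd (h * v) Hhv ltac:(simpl; rewrite Rabs_mult, (Rabs_pos_eq h); lra)).
  set (q := (g (c + h * v) - g c) / (h * v)) in Hq.
  assert (Hdiff : g (c + h * v) - g c = h * (v * q)) by (unfold q; field; split; intros ->; lra).
  assert (Hvq : v * q - v * l <= Rabs v * Rabs (q - l)).
  { rewrite <- Rabs_mult. replace (v * q - v * l) with (v * (q - l)) by ring. apply Rle_abs. }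
  assert (Hbound : Rabs v * Rabs (q - l) <= - (v * l) / 2).
  { replace (- (v * l) / 2) with (Rabs v * (- (v * l) / (2 * Rabs v))) by (field; lra).
    apply Rmult_le_compat_l; lra. }
  nra.
Qed.

Lemma derivable_pt_lim_min_interval g a b m l : a <= m <= b ->
  (forall x, a <= x <= b -> g m <= g x) -> derivable_pt_lim g m l ->
  (l < 0 -> m = b) /\ (0 < l -> m = a).
Proof.
  intros Hm Hmin Hd. split; intros Hl.
  - destruct (Req_dec m b) as [| Hmb]; [assumption | exfalso].
    destruct (derivable_pt_lim_descent g m l 1 Hd ltac:(lra) (b - m) ltac:(lra)) as [h [Hh Hlt]].
    specialize (Hmin (m + h * 1) ltac:(lra)). lra.
  - destruct (Req_dec m a) as [| Hma]; [assumption | exfalso].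
    destruct (derivable_pt_lim_descent g m l (-1) Hd ltac:(lra) (m - a) ltac:(lra)) as [h [Hh Hlt]].
    specialize (Hmin (m + h * -1) ltac:(lra)). lra.
Qed.

Lemma is_derive_intermediate_value f df a b y : a < b ->
  (forall x, a <= x <= b -> is_derive f x (df x)) ->
  df a < y < df b -> exists c, a < c < b /\ df c = y.
Proof.
  intros Hab Hd Hy.
  set (g := fun x => f x - y * x).
  assert (Hg : forall x, a <= x <= b -> derivable_pt_lim g x (df x - y)).
  { intros x Hx. apply is_derive_Reals. unfold g.
    replace (df x - y) with (df x - y * 1) by ring.
    apply (is_derive_minus (V := R_NormedModule)); [auto |].
    apply is_derive_scal, (is_derive_id (K := R_AbsRing)). }
  destruct (continuity_ab_min g a b) as [m [Hmin Hm]]; [lra | |].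
  { intros x Hx. apply derivable_continuous_pt. exists (df x - y). apply Hg, Hx. }
  destruct (derivable_pt_lim_min_interval g a b m _ Hm Hmin (Hg m Hm)) as [Hneg Hpos].
  exists m. destruct (Rtotal_order (df m - y) 0) as [Hl | [Hl | Hl]].
  - apply Hneg in Hl. subst m. lra.
  - assert (m <> a) by (intros ->; lra). assert (m <> b) by (intros ->; lra). split; lra.
  - apply Hpos in Hl. subst m. lra.
Qed.

Lemma is_derive_finite_range_const f df a b (L : list R) : a <= b ->
  (forall x, a <= x <= b -> is_derive f x (df x)) ->
  (forall x, a <= x <= b -> In (df x) L) -> df a = df b.
Proof.
  intros Hab Hd HL.
  destruct (Req_dec a b) as [<- | Hne]; [reflexivity |].
  destruct (Rtotal_order (df a) (df b)) as [Hlt | [Heq | Hgt]]; [exfalso | assumption | exfalso].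
  - destruct (interval_not_in_list L _ _ Hlt) as [y [Hy Hy_notin]].
    destruct (is_derive_intermediate_value f df a b y) as [c [Hc <-]];
      [lra | assumption | assumption |].
    apply Hy_notin, HL. lra.
  - destruct (interval_not_in_list L _ _ Hgt) as [y [Hy Hy_notin]].
    destruct (is_derive_intermediate_value (fun x => - f x) (fun x => - df x) a b (- y))
      as [c [Hc Hcy]]; [lra | | lra |].
    + intros x Hx. apply (is_derive_opp (V := R_NormedModule)), Hd, Hx.
    + apply Hy_notin. replace y with (df c) by lra. apply HL. lra.
Qed.

Lemma is_derive_sumI n (f : nat -> R -> R) (df : nat -> R) x :
  (forall i, (i < n)%nat -> is_derive (f i) x (df i)) ->
  is_derive (fun y => sumI n (fun i => f i y)) x (sumI n df).
Proof.
  induction n as [|n IH]; intros Hf; simpl.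
  - apply (is_derive_const (V := R_NormedModule)).
  - apply (is_derive_plus (V := R_NormedModule)); [apply IH; intros i Hi |]; apply Hf; lia.
Qed.

Lemma continuous_sumI n (f : nat -> R -> R) x :
  (forall i, (i < n)%nat -> continuous (f i) x) ->
  continuous (fun y => sumI n (fun i => f i y)) x.
Proof.
  induction n as [|n IH]; intros Hf; simpl.
  - apply continuous_const.
  - apply (continuous_plus (V := R_NormedModule)); [apply IH; intros i Hi |]; apply Hf; lia.
Qed.

Ltac solve_continuous HX HY :=
  cbn [pow];
  repeat lazymatch goal with
  | |- continuous (fun y => sumI _ (@?f y)) _ => apply continuous_sumI; intros ? ?
  | |- continuous (fun y => @?f y + @?g y) _ => apply (continuous_plus (V := R_NormedModule))
  | |- continuous (fun y => @?f y - @?g y) _ => apply (continuous_minus (V := R_NormedModule))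
  | |- continuous (fun y => @?f y * @?g y) _ => apply (continuous_mult (K := R_AbsRing))
  | |- continuous (fun y => Rabs (@?f y)) _ => apply continuous_Rabs_comp
  | |- continuous (fun y => cos (@?f y)) _ => apply continuous_cos_comp
  | |- continuous (fun _ => ?c) _ => apply continuous_const
  | |- _ => first [apply HX; assumption | apply HY; assumption]
  end.

Lemma locally_Rbar_interval (lo hi : Rbar) (x : R) : Rbar_lt lo x -> Rbar_lt x hi ->
  locally x (fun y => Rbar_lt lo y /\ Rbar_lt y hi).
Proof.
  intros Hlo Hhi. apply (open_and _ _ (open_Rbar_gt lo) (open_Rbar_lt hi)). split; assumption.
Qed.

Lemma is_derive_RInt_Rbar_interval (f : R -> R) (lo hi : Rbar) (a x : R) :
  (forall y : R, Rbar_lt lo y -> Rbar_lt y hi -> continuous f y) ->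
  Rbar_lt lo a -> Rbar_lt a hi -> Rbar_lt lo x -> Rbar_lt x hi ->
  is_derive (fun s => RInt f a s) x (f x).
Proof.
  intros Hf Hloa Hahi Hlox Hxhi.
  apply (is_derive_RInt f _ a x); [| apply Hf; assumption].
  refine (filter_imp _ _ _ (locally_Rbar_interval lo hi x Hlox Hxhi)). intros u [Hlou Huhi].
  apply (RInt_correct (V := R_CompleteNormedModule)),
    (ex_RInt_continuous (V := R_CompleteNormedModule)).
  intros y Hy. apply Hf.
  - apply (Rbar_lt_le_trans _ (Rmin a u)); [| exact (proj1 Hy)].
    unfold Rmin; destruct Rle_dec; assumption.
  - apply (Rbar_le_lt_trans _ (Rmax a u)); [exact (proj2 Hy) |].
    unfold Rmax; destruct Rle_dec; assumption.
Qed.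

Lemma continuous_clamp (f : R -> R) (tau : Rbar) (z : R) :
  filterlim f (at_right 0) (locally (f 0)) ->
  (forall s, 0 < s -> Rbar_lt s tau -> continuous f s) ->
  Rbar_lt z tau -> continuous (fun s => f (Rmax 0 s)) z.
Proof.
  intros Hf0 Hf Hz.
  destruct (Rtotal_order z 0) as [Hneg | [-> | Hpos]].
  - apply (continuous_ext_loc _ (fun _ => f 0)); [| apply continuous_const].
    refine (filter_imp _ _ _ (locally_Rbar_interval m_infty 0 z I Hneg)). simpl. intros y [_ Hy].
    rewrite Rmax_left by lra. reflexivity.
  - intros P HP. rewrite Rmax_left in HP by lra.
    destruct (Hf0 P HP) as [d Hd]. exists d. intros y Hy.
    destruct (Rle_dec y 0).
    + rewrite Rmax_left by lra. apply locally_singleton, HP.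
    + rewrite Rmax_right by lra. apply Hd; [assumption | lra].
  - apply (continuous_ext_loc _ f); [| apply Hf; assumption].
    refine (filter_imp _ _ _ (locally_Rbar_interval 0 tau z Hpos Hz)). intros y [Hy _].
    simpl in Hy. rewrite Rmax_right by lra. reflexivity.
Qed.

Lemma balance_of_is_derive (E P : R -> R) (tau : Rbar) t :
  (forall x : R, Rbar_lt x tau -> continuous E x /\ continuous P x) ->
  (forall x, 0 < x -> Rbar_lt x tau -> is_derive E x (- P x)) ->
  0 <= t -> Rbar_lt t tau -> E t + RInt P 0 t = E 0.
Proof.
  intros Hcont Hd Ht Htau.
  assert (Hbelow : forall x, x <= t -> Rbar_lt x tau).
  { intros x Hx. apply (Rbar_le_lt_trans _ t); [exact Hx | exact Htau]. }
  assert (HdI : forall x, x <= t -> is_derive (fun s => RInt P 0 s) x (P x)).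
  { intros x Hx. apply (is_derive_RInt_Rbar_interval P m_infty tau); try exact I.
    - intros y _ Hy. apply (Hcont y Hy).
    - apply Hbelow, Ht.
    - apply Hbelow, Hx. }
  (* The zero derivative is written as [- P s + P s] so that it matches [is_derive_plus]. *)
  destruct (MVT_gen (fun s => E s + RInt P 0 s) 0 t (fun s => - P s + P s)) as [c [_ Hc]].
  - rewrite Rmin_left, Rmax_right by lra. intros x Hx.
    apply (is_derive_plus (V := R_NormedModule)); [apply Hd; [| apply Hbelow] | apply HdI]; lra.
  - rewrite Rmin_left, Rmax_right by lra. intros x Hx.
    apply continuity_pt_filterlim, (continuous_plus (V := R_NormedModule)).
    + apply Hcont, Hbelow. lra.
    + apply (ex_derive_continuous (V := R_NormedModule)). exists (P x). apply HdI; lra.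
  - rewrite RInt_point in Hc. change (zero : R) with 0 in Hc. lra.
Qed.

(* Precomposing with [Rmax 0] extends [E] and [P] constantly to the left of 0, which
   turns continuity on [0, tau) into two-sided continuity. *)
Lemma balance_of_is_derive_clamp (E P : R -> R) (tau : Rbar) t :
  (forall x : R, Rbar_lt x tau ->
     continuous (fun s => E (Rmax 0 s)) x /\ continuous (fun s => P (Rmax 0 s)) x) ->
  (forall x, 0 < x -> Rbar_lt x tau -> is_derive E x (- P x)) ->
  0 <= t -> Rbar_lt t tau -> E t + RInt P 0 t = E 0.
Proof.
  intros Hcont Hd Ht Htau.
  assert (Hbal := balance_of_is_derive (fun s => E (Rmax 0 s)) (fun s => P (Rmax 0 s)) tau t
                    Hcont).
  cbv beta in Hbal. rewrite (Rmax_left 0 0), (Rmax_right 0 t) in Hbal by lra.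
  rewrite <- Hbal; [f_equal | | assumption | assumption].
  - apply RInt_ext. rewrite Rmin_left, Rmax_right by lra. intros x Hx.
    rewrite Rmax_right by lra. reflexivity.
  - intros x Hx Hxt. rewrite Rmax_right by lra.
    apply (is_derive_ext_loc E); [| apply Hd; assumption].
    refine (filter_imp _ _ _ (locally_Rbar_interval 0 tau x Hx Hxt)). intros y [Hy _].
    simpl in Hy. rewrite Rmax_right by lra. reflexivity.
Qed.

Section Kuramoto.

Variables (N : nat) (k0 k1 k2 : R) (thinf : nat -> nat -> R).
Hypothesis N_pos : (0 < N)%nat.
Hypothesis thinf_sym : forall i j, (i < N)%nat -> (j < N)%nat -> thinf i j = thinf j i.

Let INR_N_pos : 0 < INR N := lt_0_INR N N_pos.

Definition coupling_rhs (th om : nat -> R) (i : nat) : R :=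
  / INR N * sumI N (fun j => (k0 * cos (th j - th i) + k1) * (om j - om i))
  + k2 / INR N * sumI N (fun j => th j - th i).

Definition jump_force (th : nat -> R) (i : nat) : R :=
  k2 / INR N * sumI N (fun j => thinf i j * sgn (th j - th i)).

Definition smooth_energy (th om F : nat -> R) : R :=
  / 2 * sumI N (fun i => om i ^ 2)
  + k2 / (4 * INR N) * sumI N (fun i => sumI N (fun j => (th j - th i) ^ 2 + thinf i j ^ 2))
  + sumI N (fun i => th i * F i).

Lemma kuramoto_rhs_split th om i :
  kuramoto_rhs N k0 k1 k2 thinf th om i = coupling_rhs th om i - jump_force th i.
Proof.
  unfold kuramoto_rhs, coupling_rhs, jump_force.
  rewrite (sumI_ext N (fun j => (Rabs (th j - th i) - thinf i j) * sgn (th j - th i))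
                      (fun j => (th j - th i) + -1 * (thinf i j * sgn (th j - th i)))).
  - rewrite sumI_plus, sumI_mult_l. ring.
  - intros j _. rewrite Rmult_minus_distr_r, Rabs_mult_sgn. ring.
Qed.

Lemma In_jump_force th i :
  In (jump_force th i) (map (fun v => k2 / INR N * v) (signed_sums (thinf i) N)).
Proof.
  apply (in_map (fun v => k2 / INR N * v)), In_signed_sums. intros j _. apply sgn_cases.
Qed.

Lemma energy_split th om : energy N k2 thinf th om = smooth_energy th om (jump_force th).
Proof.
  unfold energy, smooth_energy, jump_force.
  rewrite (sumI2_ext N _ (fun i j => ((th j - th i) ^ 2 + thinf i j ^ 2)
             + -2 * ((thinf i j * sgn (th j - th i)) * (th j - th i)))).
  - rewrite sumI2_plus, sumI2_mult_l, sumI2_antisym_mult_diff.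
    + rewrite (sumI_ext N
                 (fun i => th i * (k2 / INR N * sumI N (fun j => thinf i j * sgn (th j - th i))))
                 (fun i => k2 / INR N * (th i * sumI N (fun j => thinf i j * sgn (th j - th i)))))
        by (intros; ring).
      rewrite sumI_mult_l, sumI_mult_sumI. field. lra.
    + intros i j Hi Hj. rewrite (thinf_sym j i Hj Hi).
      replace (th i - th j) with (- (th j - th i)) by ring. rewrite sgn_opp. ring.
  - intros i j _ _.
    rewrite Rmult_assoc, (Rmult_comm (sgn _)), mult_sgn, <- (pow2_abs (th j - th i)). ring.
Qed.

Lemma power_balance th om :
  sumI N (fun i => om i * coupling_rhs th om i)
  + k2 / (2 * INR N) * sumI N (fun i => sumI N (fun j => (th j - th i) * (om j - om i)))
  = - production N k0 k1 th om.
Proof.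
  unfold coupling_rhs, production.
  rewrite (sumI_ext N _ (fun i =>
      / INR N * (om i * sumI N (fun j => (k0 * cos (th j - th i) + k1) * (om j - om i)))
      + k2 / INR N * (om i * sumI N (fun j => th j - th i)))) by (intros; ring).
  rewrite sumI_plus, !sumI_mult_l, !sumI_mult_sumI.
  rewrite (sumI2_ext N (fun i j => (k0 * cos (th j - th i) + k1) * Rabs (om j - om i) ^ 2)
             (fun i j => ((k0 * cos (th j - th i) + k1) * (om j - om i)) * (om j - om i)))
    by (intros; rewrite pow2_abs; ring).
  rewrite (sumI2_antisym_mult_diff N (fun i j => (k0 * cos (th j - th i) + k1) * (om j - om i))),
    (sumI2_antisym_mult_diff N (fun i j => th j - th i)).
  - field. lra.
  - intros i j _ _. ring.
  - intros i j _ _. replace (th i - th j) with (- (th j - th i)) by ring. rewrite cos_neg. ring.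
Qed.

Lemma is_derive_smooth_energy (th om : nat -> R -> R) (dom F : nat -> R) s :
  (forall i, (i < N)%nat -> is_derive (th i) s (om i s) /\ is_derive (om i) s (dom i)) ->
  is_derive (fun y => smooth_energy (fun j => th j y) (fun j => om j y) F) s
    (sumI N (fun i => om i s * (dom i + F i))
     + k2 / (2 * INR N)
       * sumI N (fun i => sumI N (fun j => (th j s - th i s) * (om j s - om i s)))).
Proof.
  intros Hd. unfold smooth_energy.
  assert (Hkin : forall i, (i < N)%nat ->
            is_derive (fun y => om i y ^ 2) s (2 * (om i s * dom i))).
  { intros i Hi. replace (2 * (om i s * dom i)) with (INR 2 * dom i * om i s ^ Nat.pred 2)
      by (simpl; ring).
    apply is_derive_pow, (Hd i Hi). }
  assert (Hbond : forall i j, (i < N)%nat -> (j < N)%nat ->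
            is_derive (fun y => (th j y - th i y) ^ 2 + thinf i j ^ 2) s
              (2 * ((th j s - th i s) * (om j s - om i s)))).
  { intros i j Hi Hj.
    replace (2 * ((th j s - th i s) * (om j s - om i s)))
      with (INR 2 * (om j s - om i s) * (th j s - th i s) ^ Nat.pred 2 + 0) by (simpl; ring).
    apply (is_derive_plus (V := R_NormedModule)); [| apply (is_derive_const (V := R_NormedModule))].
    apply (is_derive_pow (fun y => th j y - th i y)), (is_derive_minus (V := R_NormedModule));
      [apply (Hd j Hj) | apply (Hd i Hi)]. }
  assert (Hpot : forall i, (i < N)%nat -> is_derive (fun y => th i y * F i) s (om i s * F i)).
  { intros i Hi. replace (om i s * F i) with (om i s * F i + th i s * 0) by ring.
    apply Derive.is_derive_mult; [apply (Hd i Hi) |].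
    apply (is_derive_const (V := R_NormedModule)). }
  replace (sumI N (fun i => om i s * (dom i + F i))
           + k2 / (2 * INR N)
             * sumI N (fun i => sumI N (fun j => (th j s - th i s) * (om j s - om i s))))
    with (/ 2 * sumI N (fun i => 2 * (om i s * dom i))
          + k2 / (4 * INR N)
            * sumI N (fun i => sumI N (fun j => 2 * ((th j s - th i s) * (om j s - om i s))))
          + sumI N (fun i => om i s * F i)).
  - repeat apply (is_derive_plus (V := R_NormedModule)); try apply is_derive_scal;
      apply is_derive_sumI; intros i Hi; try apply is_derive_sumI; intros; auto.
  - rewrite (sumI_ext N (fun i => om i s * (dom i + F i)) (fun i => om i s * dom i + om i s * F i))
      by (intros; ring).
    rewrite sumI_plus, sumI_mult_l, sumI2_mult_l. field. lra.
Qed.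

Section Continuity.

Variables (X Y : nat -> R -> R) (z : R).
Hypothesis X_cont : forall j, (j < N)%nat -> continuous (X j) z.
Hypothesis Y_cont : forall j, (j < N)%nat -> continuous (Y j) z.

Lemma continuous_coupling_rhs i : (i < N)%nat ->
  continuous (fun s => coupling_rhs (fun j => X j s) (fun j => Y j s) i) z.
Proof. intros Hi. unfold coupling_rhs. solve_continuous X_cont Y_cont. Qed.

Lemma continuous_energy :
  continuous (fun s => energy N k2 thinf (fun j => X j s) (fun j => Y j s)) z.
Proof. unfold energy. solve_continuous X_cont Y_cont. Qed.

Lemma continuous_production :
  continuous (fun s => production N k0 k1 (fun j => X j s) (fun j => Y j s)) z.
Proof. unfold production. solve_continuous X_cont Y_cont. Qed.

End Continuity.

Section Solution.

Variables (tau : Rbar) (theta omega : nat -> R -> R).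
Hypothesis solution : forall t, 0 < t -> Rbar_lt t tau -> forall i, (i < N)%nat ->
  is_derive (theta i) t (omega i t) /\
  is_derive (omega i) t
    (kuramoto_rhs N k0 k1 k2 thinf (fun j => theta j t) (fun j => omega j t) i).

Lemma continuous_solution s j : 0 < s -> Rbar_lt s tau -> (j < N)%nat ->
  continuous (theta j) s /\ continuous (omega j) s.
Proof.
  intros Hs Hst Hj. destruct (solution s Hs Hst j Hj) as [Hth Hom].
  split; apply (ex_derive_continuous (V := R_NormedModule)); eexists; eassumption.
Qed.

Lemma jump_force_const a b i : 0 < a -> 0 < b -> Rbar_lt a tau -> Rbar_lt b tau -> (i < N)%nat ->
  jump_force (fun j => theta j a) i = jump_force (fun j => theta j b) i.
Proof.
  assert (Hle : forall a b, 0 < a -> a <= b -> Rbar_lt b tau -> (i < N)%nat ->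
            jump_force (fun j => theta j a) i = jump_force (fun j => theta j b) i).
  { clear a b. intros a b Ha Hab Hb Hi.
    set (C := fun s => coupling_rhs (fun j => theta j s) (fun j => omega j s) i).
    (* [RInt C a s - omega i s] has derivative [jump_force], which ranges over a finite set. *)
    apply (is_derive_finite_range_const (fun s => RInt C a s - omega i s)
             (fun s => jump_force (fun j => theta j s) i) a b
             (map (fun v => k2 / INR N * v) (signed_sums (thinf i) N)) Hab).
    - intros x Hx.
      assert (Hxt : Rbar_lt x tau) by (apply (Rbar_le_lt_trans _ b); [apply Hx | exact Hb]).
      assert (Hat : Rbar_lt a tau) by (apply (Rbar_le_lt_trans _ b); [exact Hab | exact Hb]).
      replace (jump_force (fun j => theta j x) i)
        with (C x - kuramoto_rhs N k0 k1 k2 thinf (fun j => theta j x) (fun j => omega j x) i)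
        by (unfold C; rewrite kuramoto_rhs_split; ring).
      apply (is_derive_minus (V := R_NormedModule)).
      + apply (is_derive_RInt_Rbar_interval C 0 tau); try assumption; try (simpl; lra).
        intros y Hy Hyt. apply continuous_coupling_rhs; try assumption;
          intros j Hj; apply (continuous_solution y j); assumption.
      + apply solution; [lra | assumption | assumption].
    - intros x _. apply In_jump_force. }
  intros Ha Hb Hat Hbt Hi. destruct (Rle_dec a b).
  - apply Hle; [assumption | lra | assumption | assumption].
  - symmetry. apply Hle; [assumption | lra | assumption | assumption].
Qed.

Lemma is_derive_energy s : 0 < s -> Rbar_lt s tau ->
  is_derive (fun y => energy N k2 thinf (fun j => theta j y) (fun j => omega j y)) s
    (- production N k0 k1 (fun j => theta j s) (fun j => omega j s)).
Proof.
  intros Hs Hst.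
  set (F := jump_force (fun j => theta j s)).
  apply (is_derive_ext_loc (fun y => smooth_energy (fun j => theta j y) (fun j => omega j y) F)).
  - refine (filter_imp _ _ _ (locally_Rbar_interval 0 tau s Hs Hst)). intros y [Hy Hyt].
    rewrite energy_split. unfold smooth_energy. f_equal. apply sumI_ext. intros i Hi.
    unfold F. rewrite (jump_force_const s y i); auto.
  - rewrite <- power_balance.
    rewrite (sumI_ext N _ (fun i => omega i s *
               (kuramoto_rhs N k0 k1 k2 thinf (fun j => theta j s) (fun j => omega j s) i + F i)))
      by (intros; rewrite kuramoto_rhs_split; unfold F; ring).
    apply is_derive_smooth_energy. intros i Hi. apply solution; assumption.
Qed.

End Solution.

End Kuramoto.

Theorem proposition2p2
  (N : nat) (HN : (2 <= N)%nat)
  (k0 k1 k2 : R) (Hk0 : 0 <= k0) (Hk1 : 0 <= k1) (Hk2 : 0 <= k2)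
  (thinf : nat -> nat -> R)
  (Hdiag : forall i, (i < N)%nat -> thinf i i = 0)
  (Hsym : forall i j, (i < N)%nat -> (j < N)%nat -> thinf i j = thinf j i)
  (tau : Rbar) (Htau : Rbar_lt 0 tau)
  (theta omega : nat -> R -> R)
  (Hcont0 : forall i, (i < N)%nat ->
     filterlim (theta i) (at_right 0) (locally (theta i 0)) /\
     filterlim (omega i) (at_right 0) (locally (omega i 0)))
  (Hode : forall t, 0 < t -> Rbar_lt t tau -> forall i, (i < N)%nat ->
     is_derive (theta i) t (omega i t) /\
     is_derive (omega i) t
       (kuramoto_rhs N k0 k1 k2 thinf (fun j => theta j t) (fun j => omega j t) i)) :
  forall t, 0 <= t -> Rbar_lt t tau ->
    energy N k2 thinf (fun j => theta j t) (fun j => omega j t)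
    + RInt (fun s => production N k0 k1 (fun j => theta j s) (fun j => omega j s)) 0 t
    = energy N k2 thinf (fun j => theta j 0) (fun j => omega j 0).
Proof.
  intros t Ht Htt.
  assert (HN0 : (0 < N)%nat) by lia.
  apply (balance_of_is_derive_clamp
           (fun s => energy N k2 thinf (fun j => theta j s) (fun j => omega j s))
           (fun s => production N k0 k1 (fun j => theta j s) (fun j => omega j s)) tau);
    [| | assumption | assumption].
  - intros x Hx.
    assert (Hclamp : forall j, (j < N)%nat ->
              continuous (fun s => theta j (Rmax 0 s)) x
              /\ continuous (fun s => omega j (Rmax 0 s)) x).
    { intros j Hj. destruct (Hcont0 j Hj) as [Hth Hom].
      split; apply (continuous_clamp _ tau); try assumption; intros s Hs Hst;
        apply (continuous_solution N k0 k1 k2 thinf tau theta omega Hode s j Hs Hst Hj). }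
    split; [apply (continuous_energy N k2 thinf (fun j s => theta j (Rmax 0 s)))
           | apply (continuous_production N k0 k1 (fun j s => theta j (Rmax 0 s)))];
      intros j Hj; apply Hclamp, Hj.
  - intros x Hx Hxt. apply (is_derive_energy N k0 k1 k2 thinf HN0 Hsym tau); assumption.
Qed.
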